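(* Every normal hyperimaginary is equivalent ($\sim$) to a sequence of finitary hyperimaginaries.
   Context: $\mathfrak{C}$ is a monster model of a complete first-order theory $T$. A hyperimaginary is an equivalence class $e=a_E$ of a possibly infinite small tuple $a$ under a $0$-type-definable (type-definable without parameters) equivalence relation $E$; automorphisms act by $f(a_E)=f(a)_E$; a small sequence of hyperimaginaries is regarded as a hyperimaginary, fixed by $f$ iff each entry is. $\mathrm{Fix}(e)=\{f\in\mathrm{Aut}(\mathfrak{C}): f(e)=e\}$; $e$ is normal if $\mathrm{Fix}(e)$ is a normal subgroup of $\mathrm{Aut}(\mathfrak{C})$. $\mathrm{dcl}(e)$ is the class of hyperimaginaries fixed by every $f\in\mathrm{Fix}(e)$; $e\sim d$ means $\mathrm{dcl}(e)=\mathrm{dcl}(d)$. A hyperimaginary $e$ is finitary if $e\sim b_F$ for some finite tuple $b$ and some $0$-type-definable equivalence relation $F$ (equivalently, $e\in\mathrm{dcl}(A)$ for some finite set $A$ of real elements). *)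

From Stdlib Require Import List.
From Stdlib Require Vectors.Fin.
Set Implicit Arguments.

Record language := {
  Fsym : Type; Fari : Fsym -> nat;     (* function symbols (arity 0 = constants) *)
  Rsym : Type; Rari : Rsym -> nat
}.

Section Syntax.
Variable L : language.

(* Terms with free variables in V and bound (de Bruijn) variables in nat. *)
Inductive term (V : Type) : Type :=
| tfree : V -> term V
| tbound : nat -> term V
| tapp : forall f : Fsym L, (Fin.t (Fari L f) -> term V) -> term V.

Inductive formula (V : Type) : Type :=
| feq : term V -> term V -> formula V
| frel : forall r : Rsym L, (Fin.t (Rari L r) -> term V) -> formula V
| fneg : formula V -> formula V
| fand : formula V -> formula V -> formula V
| fex : formula V -> formula V.   (* binds de Bruijn index 0 *)
End Syntax.

Arguments tfree {L V}. Arguments tbound {L V}. Arguments tapp {L V}.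
Arguments feq {L V}. Arguments frel {L V}. Arguments fneg {L V}.
Arguments fand {L V}. Arguments fex {L V}.

Record structure (L : language) := {
  carrier :> Type;
  carrier_inh : inhabited carrier;
  sfun : forall f : Fsym L, (Fin.t (Fari L f) -> carrier) -> carrier;
  srel : forall r : Rsym L, (Fin.t (Rari L r) -> carrier) -> Prop
}.

Section Semantics.
Variables (L : language) (M : structure L).

Definition scons (m : M) (env : nat -> M) : nat -> M :=
  fun n => match n with O => m | S k => env k end.

Fixpoint teval (V : Type) (s : V -> M) (env : nat -> M) (t : term L V) : M :=
  match t with
  | tfree v => s v
  | tbound n => env n
  | tapp f args => sfun M f (fun i => teval s env (args i))
  end.

Fixpoint sat (V : Type) (s : V -> M) (env : nat -> M) (phi : formula L V) : Prop :=
  match phi with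
  | feq t u => teval s env t = teval s env u
  | frel r args => srel M r (fun i => teval s env (args i))
  | fneg p => ~ sat s env p
  | fand p q => sat s env p /\ sat s env q
  | fex p => exists m : M, sat s (scons m env) p
  end.

(* Truth of a formula under an assignment of its free variables
   (dangling de Bruijn indices, if any, are universally closed). *)
Definition holds (V : Type) (s : V -> M) (phi : formula L V) : Prop :=
  forall env, sat s env phi.

Definition is_aut (g : M -> M) : Prop :=
  (forall x y, g x = g y -> x = y) /\ (forall y, exists x, g x = y) /\
  (forall f args, g (sfun M f args) = sfun M f (fun i => g (args i))) /\
  (forall r args, srel M r args <-> srel M r (fun i => g (args i))).

(* ---------- Smallness relative to a cardinal kappa = |K| ---------- *)
Definition small (K X : Type) : Prop :=
  ~ exists h : K -> X, forall x y, h x = h y -> x = y.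

Definition fin_sat (A : Type) (a : A -> M) (Sigma : formula L (A + unit) -> Prop) :=
  forall l : list (formula L (A + unit)), (forall p, In p l -> Sigma p) ->
    exists m : M, forall p, In p l -> holds (fun v => match v with inl x => a x | inr _ => m end) p.

(* M is a monster model: kappa = |K| is a regular cardinal > |L| + aleph_0,
   M is kappa-saturated and strongly kappa-homogeneous. *)
Definition monster (K : Type) : Prop :=
  small K nat /\ small K (Fsym L) /\ small K (Rsym L) /\
  (* regularity of kappa *)
  (forall (J : Type) (X : J -> Type), small K J -> (forall j, small K (X j)) ->
     small K {j : J & X j}) /\
  (forall (A : Type) (a : A -> M) (Sigma : formula L (A + unit) -> Prop),
     small K A -> fin_sat a Sigma ->
     exists m : M, forall p, Sigma p ->
       holds (fun v => match v with inl x => a x | inr _ => m end) p) /\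
  (forall (A : Type) (a b : A -> M), small K A ->
     (forall p : formula L A, holds a p <-> holds b p) ->
     exists g, is_aut g /\ forall x, g (a x) = b x).

Definition tdrel (I : Type) (Sigma : formula L (I + I) -> Prop) (x y : I -> M) : Prop :=
  forall p, Sigma p -> holds (fun v => match v with inl i => x i | inr i => y i end) p.

Definition is_equiv (X : Type) (R : X -> X -> Prop) : Prop :=
  (forall x, R x x) /\ (forall x y, R x y -> R y x) /\
  (forall x y z, R x y -> R y z -> R x z).

Record hyperimaginary (K : Type) := {
  hI : Type;
  hI_small : small K hI;
  hrep : hI -> M;
  hE : formula L (hI + hI) -> Prop;
  hE_equiv : is_equiv (tdrel hE)
}.

Definition Fix (K : Type) (e : hyperimaginary K) (g : M -> M) : Prop :=
  is_aut g /\ tdrel (hE e) (fun i => g (hrep e i)) (hrep e).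

Definition FixSeq (K J : Type) (d : J -> hyperimaginary K) (g : M -> M) : Prop :=
  is_aut g /\ forall j, Fix (d j) g.

(* dcl of (the hyperimaginary with fixing group) P : the class of
   hyperimaginaries fixed by every automorphism in P. *)
Definition in_dcl (K : Type) (P : (M -> M) -> Prop) (c : hyperimaginary K) : Prop :=
  forall g, is_aut g -> P g -> Fix c g.

Definition hsim (K : Type) (P Q : (M -> M) -> Prop) : Prop :=
  forall c : hyperimaginary K, in_dcl P c <-> in_dcl Q c.

Definition normal_h (K : Type) (e : hyperimaginary K) : Prop :=
  forall g h h', Fix e g -> is_aut h -> is_aut h' ->
    (forall x, h (h' x) = x) -> (forall x, h' (h x) = x) ->
    Fix e (fun x => h (g (h' x))).

Definition finitary (K : Type) (e : hyperimaginary K) : Prop :=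
  exists d : hyperimaginary K,
    (exists l : list (hI d), forall i, In i l) /\ hsim K (Fix e) (Fix d).

End Semantics.

(* For the subtuple [b] of the representative [a] indexed by a finite list [t], let
   [x R_t y] iff [x = y] or [(x, y) = h (g b, b)] for an automorphism [h] and some [g]
   fixing [e].  Normality of [Fix e] makes [R_t] transitive, and [R_t] is
   type-definable: it is equality together with the projection of the partial type
   "[W] and [Z] realize tp(a), [W E Z], [W|t = x], [Z|t = y]", and such projections are
   type-definable by saturation in small tuples of variables (obtained from
   saturation in one variable by Zorn's lemma).  Every [g] fixing [e] fixes all the
   classes [b_{R_t}]; conversely, if [g] fixes all of them then [g(a) E a], since each
   formula of [E] involves finitely many coordinates of [a].  Hence [e] is equivalent
   to the sequence of the finitary hyperimaginaries [b_{R_t}]. *)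

From Stdlib Require Import List Arith Lia.
From Stdlib Require Import Classical ClassicalEpsilon FunctionalExtensionality ProofIrrelevance.
Import ListNotations.

Section Syntax.
Context {L : language}.

Fixpoint fin_list {A : Type} (n : nat) : (Fin.t n -> A) -> list A :=
  match n with
  | 0 => fun _ => nil
  | S m => fun g => g Fin.F1 :: fin_list m (fun i => g (Fin.FS i))
  end.

Lemma fin_list_In {A : Type} n (g : Fin.t n -> A) i : In (g i) (fin_list n g).
Proof.
  induction i as [|n i IH]; simpl; [now left|].
  right; exact (IH (fun j => g (Fin.FS j))).
Qed.

Lemma In_concat_fin_list {A : Type} n (g : Fin.t n -> list A) i x :
  In x (g i) -> In x (concat (fin_list n g)).
Proof. intros Hx; apply in_concat; exists (g i); split; [apply fin_list_In | exact Hx]. Qed.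

Fixpoint term_fv {V} (t : term L V) : list V :=
  match t with
  | tfree v => [v]
  | tbound _ => nil
  | tapp f args => concat (fin_list _ (fun i => term_fv (args i)))
  end.

Fixpoint formula_fv {V} (p : formula L V) : list V :=
  match p with
  | feq t u => term_fv t ++ term_fv u
  | frel r args => concat (fin_list _ (fun i => term_fv (args i)))
  | fneg p => formula_fv p
  | fand p q => formula_fv p ++ formula_fv q
  | fex p => formula_fv p
  end.

(* One more than the largest dangling de Bruijn index. *)
Fixpoint term_bound {V} (t : term L V) : nat :=
  match t with
  | tfree _ => 0
  | tbound n => S n
  | tapp f args => list_max (fin_list _ (fun i => term_bound (args i)))
  end.

Fixpoint formula_bound {V} (p : formula L V) : nat :=
  match p with
  | feq t u => max (term_bound t) (term_bound u)
  | frel r args => list_max (fin_list _ (fun i => term_bound (args i)))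
  | fneg p => formula_bound p
  | fand p q => max (formula_bound p) (formula_bound q)
  | fex p => pred (formula_bound p)
  end.

Fixpoint term_ren {V W} (r : V -> W) (t : term L V) : term L W :=
  match t with
  | tfree v => tfree (r v)
  | tbound n => tbound n
  | tapp f args => tapp f (fun i => term_ren r (args i))
  end.

Fixpoint formula_ren {V W} (r : V -> W) (p : formula L V) : formula L W :=
  match p with
  | feq t u => feq (term_ren r t) (term_ren r u)
  | frel R args => frel R (fun i => term_ren r (args i))
  | fneg p => fneg (formula_ren r p)
  | fand p q => fand (formula_ren r p) (formula_ren r q)
  | fex p => fex (formula_ren r p)
  end.

Definition eq_dec_classic {W} (x y : W) : {x = y} + {x <> y} :=
  excluded_middle_informative (x = y).

Fixpoint index_of {W} (w : W) (ws : list W) : nat :=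
  match ws with
  | nil => 0
  | x :: r => if eq_dec_classic w x then 0 else S (index_of w r)
  end.

(* Turns the free variables [inr w] into bound variables, [w] going to the
   index [d + index_of w ws]; the bound variables [>= d] are shifted past them. *)
Fixpoint term_abstract {V W} (d : nat) (ws : list W) (t : term L (V + W)) : term L V :=
  match t with
  | tfree (inl v) => tfree v
  | tfree (inr w) => tbound (d + index_of w ws)
  | tbound n => if n <? d then tbound n else tbound (n + length ws)
  | tapp f args => tapp f (fun i => term_abstract d ws (args i))
  end.

Fixpoint formula_abstract {V W} (d : nat) (ws : list W) (p : formula L (V + W)) : formula L V :=
  match p with
  | feq t u => feq (term_abstract d ws t) (term_abstract d ws u)
  | frel R args => frel R (fun i => term_abstract d ws (args i))
  | fneg p => fneg (formula_abstract d ws p)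
  | fand p q => fand (formula_abstract d ws p) (formula_abstract d ws q)
  | fex p => fex (formula_abstract (S d) ws p)
  end.

Fixpoint fex_n {V} (k : nat) (p : formula L V) : formula L V :=
  match k with
  | 0 => p
  | S k => fex_n k (fex p)
  end.

Definition fex_vars {V W} (ws : list W) (p : formula L (V + W)) : formula L V :=
  fex_n (length ws) (formula_abstract 0 ws p).

Definition fclose {V} (p : formula L V) : formula L V :=
  fneg (fex_n (formula_bound p) (fneg p)).

Definition ftrue {V} : formula L V := fex (feq (tbound 0) (tbound 0)).

Fixpoint fbigand {V} (l : list (formula L V)) : formula L V :=
  match l with
  | nil => ftrue
  | p :: r => fand p (fbigand r)
  end.

Definition fdisj {V} (p q : formula L V) : formula L V := fneg (fand (fneg p) (fneg q)).

Definition rights {V W} (l : list (V + W)) : list W :=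
  flat_map (fun v => match v with inl _ => nil | inr w => [w] end) l.

Lemma In_rights {V W} (l : list (V + W)) w : In (inr w) l -> In w (rights l).
Proof. intros; apply in_flat_map; exists (inr w); simpl; auto. Qed.

End Syntax.

Definition sumf {V W X} (s : V -> X) (u : W -> X) : V + W -> X :=
  fun v => match v with inl x => s x | inr w => u w end.

Section Semantics.
Context {L : language} (M : structure L).

Fixpoint prepend (ms : list M) (env : nat -> M) : nat -> M :=
  match ms with
  | nil => env
  | m :: r => scons M m (prepend r env)
  end.

Lemma prepend_shift ms env n : prepend ms env (n + length ms) = env n.
Proof.
  induction ms as [|m ms IH]; simpl; [now rewrite Nat.add_0_r|].
  now rewrite Nat.add_succ_r.
Qed.

Lemma prepend_nth ms env k d : k < length ms -> prepend ms env k = nth k ms d.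
Proof.
  revert k; induction ms as [|m ms IH]; simpl; intros k Hk; [lia|].
  destruct k; simpl; [reflexivity | apply IH; lia].
Qed.

Lemma nth_index_of {W} (w : W) ws d : In w ws -> nth (index_of w ws) ws d = w.
Proof.
  induction ws as [|x ws IH]; simpl; [tauto|].
  destruct (eq_dec_classic w x); simpl; [congruence|].
  intros [<-|Hw]; [congruence | auto].
Qed.

Lemma index_of_lt {W} (w : W) ws : In w ws -> index_of w ws < length ws.
Proof.
  induction ws as [|x ws IH]; simpl; [tauto|].
  destruct (eq_dec_classic w x); [lia|].
  intros [<-|Hw]; [congruence|]. specialize (IH Hw); lia.
Qed.

Lemma list_max_In l x : In x l -> x <= list_max l.
Proof.
  intros Hx. pose proof (proj1 (list_max_le l (list_max l)) (le_n _)) as Hle.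
  rewrite Forall_forall in Hle; auto.
Qed.

Lemma teval_ren {V W} (r : V -> W) s env t :
  teval M s env (term_ren r t) = teval M (fun v => s (r v)) env t.
Proof.
  induction t; simpl; auto.
  f_equal; apply functional_extensionality; auto.
Qed.

Lemma sat_ren {V W} (r : V -> W) p :
  forall s env, sat M s env (formula_ren r p) <-> sat M (fun v => s (r v)) env p.
Proof.
  induction p as [t u|R args|p IH|p IHp q IHq|p IH]; intros s env; simpl.
  - now rewrite !teval_ren.
  - replace (fun i => teval M s env (term_ren r (args i)))
      with (fun i => teval M (fun v => s (r v)) env (args i)); [tauto|].
    apply functional_extensionality; intros; now rewrite teval_ren.
  - now rewrite IH.
  - now rewrite IHp, IHq.
  - split; intros [m Hm]; exists m; apply IH; exact Hm.
Qed.

Lemma teval_free_ext {V} t (s1 s2 : V -> M) env :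
  (forall v, In v (term_fv t) -> s1 v = s2 v) -> teval M s1 env t = teval M s2 env t.
Proof.
  induction t as [v|n|f args IH]; simpl; intros Hs; auto.
  f_equal; apply functional_extensionality; intros i.
  apply IH; intros v Hv; apply Hs; eapply In_concat_fin_list; eauto.
Qed.

Lemma sat_free_ext {V} p : forall (s1 s2 : V -> M) env,
  (forall v, In v (formula_fv p) -> s1 v = s2 v) -> (sat M s1 env p <-> sat M s2 env p).
Proof.
  induction p as [t u|R args|p IH|p IHp q IHq|p IH]; simpl; intros s1 s2 env Hs.
  - rewrite (teval_free_ext t s1 s2), (teval_free_ext u s1 s2); try tauto;
      intros; apply Hs, in_or_app; auto.
  - replace (fun i => teval M s1 env (args i)) with (fun i => teval M s2 env (args i)); [tauto|].
    apply functional_extensionality; intros i; symmetry; apply teval_free_ext.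
    intros v Hv; apply Hs; eapply In_concat_fin_list; eauto.
  - now rewrite (IH s1 s2).
  - rewrite (IHp s1 s2), (IHq s1 s2); try tauto; intros; apply Hs, in_or_app; auto.
  - assert (Hm : forall m, sat M s1 (scons M m env) p <-> sat M s2 (scons M m env) p)
      by (intros m; apply IH; exact Hs).
    split; intros [m H]; exists m; apply Hm; exact H.
Qed.

Lemma teval_env_ext {V} t (s : V -> M) e1 e2 :
  (forall k, k < term_bound t -> e1 k = e2 k) -> teval M s e1 t = teval M s e2 t.
Proof.
  induction t as [v|n|f args IH]; simpl; intros He; auto.
  f_equal; apply functional_extensionality; intros i.
  apply IH; intros k Hk; apply He.
  eapply Nat.lt_le_trans; [exact Hk|].
  apply list_max_In, (fin_list_In _ (fun i => term_bound (args i))).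
Qed.

Lemma sat_env_ext {V} p : forall (s : V -> M) e1 e2,
  (forall k, k < formula_bound p -> e1 k = e2 k) -> (sat M s e1 p <-> sat M s e2 p).
Proof.
  induction p as [t u|R args|p IH|p IHp q IHq|p IH]; simpl; intros s e1 e2 He.
  - rewrite (teval_env_ext t s e1 e2), (teval_env_ext u s e1 e2); try tauto;
      intros; apply He; lia.
  - replace (fun i => teval M s e1 (args i)) with (fun i => teval M s e2 (args i)); [tauto|].
    apply functional_extensionality; intros i; symmetry; apply teval_env_ext.
    intros k Hk; apply He. eapply Nat.lt_le_trans; [exact Hk|].
    apply list_max_In, (fin_list_In _ (fun i => term_bound (args i))).
  - now rewrite (IH s e1 e2).
  - rewrite (IHp s e1 e2), (IHq s e1 e2); try tauto; intros; apply He; lia.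
  - assert (Hm : forall m, sat M s (scons M m e1) p <-> sat M s (scons M m e2) p).
    { intros m; apply IH; intros [|k] Hk; simpl; auto; apply He; lia. }
    split; intros [m H]; exists m; apply Hm; exact H.
Qed.

Lemma sat_fex_n {V} k : forall (p : formula L V) s env,
  sat M s env (fex_n k p) <-> exists ms, length ms = k /\ sat M s (prepend ms env) p.
Proof.
  induction k as [|k IH]; simpl; intros p s env.
  - split; [now exists nil|]. intros [[|m ms] [Hl Hp]]; [exact Hp | discriminate].
  - rewrite IH; split.
    + intros [ms [Hl [m Hm]]]; exists (m :: ms); simpl; auto.
    + intros [[|m ms] [Hl Hp]]; simpl in *; [discriminate|].
      exists ms; split; [congruence | now exists m].
Qed.

Lemma teval_abstract {V W} (ws : list W) t : forall d (s : V -> M) u E env,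
  (forall n, n < d -> E n = env n) -> (forall n, d <= n -> E (n + length ws) = env n) ->
  (forall w, In w ws -> E (d + index_of w ws) = u w) ->
  (forall w, In (inr w) (term_fv t) -> In w ws) ->
  teval M s E (term_abstract d ws t) = teval M (sumf s u) env t.
Proof.
  induction t as [[v|w]|n|f args IH]; simpl; intros d s u E env Hlt Hge Hws Hfv; auto.
  - destruct (Nat.ltb_spec n d); simpl; auto.
  - f_equal; apply functional_extensionality; intros i.
    apply IH; auto. intros; apply Hfv; eapply In_concat_fin_list; eauto.
Qed.

Lemma sat_abstract {V W} (ws : list W) p : forall d (s : V -> M) u E env,
  (forall n, n < d -> E n = env n) -> (forall n, d <= n -> E (n + length ws) = env n) ->
  (forall w, In w ws -> E (d + index_of w ws) = u w) ->
  (forall w, In (inr w) (formula_fv p) -> In w ws) ->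
  (sat M s E (formula_abstract d ws p) <-> sat M (sumf s u) env p).
Proof.
  induction p as [t t'|R args|p IH|p IHp q IHq|p IH]; simpl; intros d s u E env Hlt Hge Hws Hfv.
  - rewrite !(teval_abstract ws _ d s u E env); auto; try tauto;
      intros; apply Hfv, in_or_app; auto.
  - replace (fun i => teval M s E (term_abstract d ws (args i)))
      with (fun i => teval M (sumf s u) env (args i)); [tauto|].
    apply functional_extensionality; intros i; symmetry; apply teval_abstract; auto.
    intros; apply Hfv; eapply In_concat_fin_list; eauto.
  - now rewrite (IH d s u E env).
  - rewrite (IHp d s u E env), (IHq d s u E env); auto; try tauto;
      intros; apply Hfv, in_or_app; auto.
  - assert (Hm : forall m, sat M s (scons M m E) (formula_abstract (S d) ws p)
                      <-> sat M (sumf s u) (scons M m env) p).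
    { intros m; apply IH; auto.
      - intros [|n] Hn; simpl; auto; apply Hlt; lia.
      - intros [|n] Hn; simpl; [lia|]; apply Hge; lia. }
    split; intros [m H]; exists m; apply Hm; exact H.
Qed.

Lemma sat_fex_vars {V W} (ws : list W) (p : formula L (V + W)) s env :
  (forall w, In (inr w) (formula_fv p) -> In w ws) ->
  (sat M s env (fex_vars ws p) <-> exists u, sat M (sumf s u) env p).
Proof.
  intros Hfv; unfold fex_vars; rewrite sat_fex_n; split.
  - intros [ms [Hl H]]; exists (fun w => prepend ms env (index_of w ws)).
    rewrite <- (sat_abstract ws p 0 s _ (prepend ms env) env); auto.
    + intros; lia.
    + intros n _; rewrite <- Hl; apply prepend_shift.
  - intros [u H]; exists (map u ws); split; [apply length_map|].
    rewrite (sat_abstract ws p 0 s u _ env); auto.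
    + intros; lia.
    + intros n _; rewrite <- (length_map u ws); apply prepend_shift.
    + intros w Hw; simpl.
      rewrite (prepend_nth _ _ _ (u w)) by (rewrite length_map; apply index_of_lt; auto).
      now rewrite map_nth, nth_index_of.
Qed.

Definition closed {V} (p : formula L V) : Prop :=
  forall (s : V -> M) e1 e2, sat M s e1 p <-> sat M s e2 p.

Lemma sat_fclose {V} (p : formula L V) s env : sat M s env (fclose p) <-> holds M s p.
Proof.
  unfold fclose, holds; simpl; rewrite sat_fex_n; split.
  - intros H e; apply NNPP; intros Hn; apply H.
    exists (map e (seq 0 (formula_bound p))); split; [now rewrite length_map, length_seq|].
    simpl; intros Hs; apply Hn.
    rewrite (sat_env_ext p s e (prepend (map e (seq 0 (formula_bound p))) env)); auto.
    intros k Hk.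
    rewrite (prepend_nth _ _ _ (e 0)) by (now rewrite length_map, length_seq).
    now rewrite (map_nth e _ 0), seq_nth.
  - intros H [ms [_ Hs]]; apply Hs, H.
Qed.

Lemma fclose_closed {V} (p : formula L V) : closed (fclose p).
Proof. intros s e1 e2; now rewrite !sat_fclose. Qed.

Lemma closed_holds {V} (p : formula L V) s env : closed p -> (holds M s p <-> sat M s env p).
Proof. intros Hc; split; [intros H; apply H | intros H e; now apply (Hc s env e)]. Qed.

Lemma holds_ren_fclose {V W} (r : V -> W) (p : formula L V) (s : W -> M) :
  holds M s (formula_ren r (fclose p)) <-> holds M (fun v => s (r v)) p.
Proof.
  destruct (carrier_inh M) as [m].
  split; [intros H; specialize (H (fun _ => m)) | intros H env];
    rewrite sat_ren, sat_fclose in *; exact H.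
Qed.

Lemma holds_type_eq {V} (a b : V -> M) :
  (forall p, holds M a p -> holds M b p) -> forall p, holds M a p <-> holds M b p.
Proof.
  intros Hab p; split; [apply Hab|]; intros Hb; apply NNPP; intros Ha.
  destruct (carrier_inh M) as [m].
  assert (Hn : holds M a (fneg (fclose p))) by (intros env H; apply Ha, (sat_fclose p a env), H).
  apply (Hab _ Hn (fun _ => m)), sat_fclose, Hb.
Qed.

Lemma sat_fbigand {V} (l : list (formula L V)) s env :
  sat M s env (fbigand l) <-> forall p, In p l -> sat M s env p.
Proof.
  induction l as [|p l IH]; simpl.
  - destruct (carrier_inh M) as [m]; split; [tauto | now exists m].
  - rewrite IH; split; [intros [H1 H2] q [<-|Hq]; auto | intros H; split; auto].
Qed.

Lemma holds_ext {V} (s1 s2 : V -> M) p : (forall v, s1 v = s2 v) -> holds M s1 p -> holds M s2 p.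
Proof. intros E; replace s2 with s1; [auto | now apply functional_extensionality]. Qed.

End Semantics.

Section Automorphisms.
Context {L : language} (M : structure L).

Lemma teval_aut {V} g (s : V -> M) env t :
  is_aut M g -> teval M (fun v => g (s v)) (fun n => g (env n)) t = g (teval M s env t).
Proof.
  intros [_ [_ [Hf _]]]; induction t as [v|n|f args IH]; simpl; auto.
  rewrite Hf; f_equal; apply functional_extensionality; auto.
Qed.

Lemma scons_aut g m env : (fun n => g (scons M m env n)) = scons M (g m) (fun n => g (env n)).
Proof. apply functional_extensionality; now intros []. Qed.

Lemma sat_aut {V} g p : is_aut M g ->
  forall (s : V -> M) env, sat M (fun v => g (s v)) (fun n => g (env n)) p <-> sat M s env p.
Proof.
  intros Hg; pose proof Hg as [Hinj [Hsurj [_ Hr]]].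
  induction p as [t u|R args|p IH|p IHp q IHq|p IH]; intros s env; simpl.
  - rewrite !teval_aut by exact Hg; split; [apply Hinj | congruence].
  - rewrite (Hr R (fun i => teval M s env (args i))).
    replace (fun i => teval M (fun v => g (s v)) (fun n => g (env n)) (args i))
      with (fun i => g (teval M s env (args i))); [tauto|].
    apply functional_extensionality; intros; now rewrite teval_aut.
  - now rewrite IH.
  - now rewrite IHp, IHq.
  - split.
    + intros [m Hm]; destruct (Hsurj m) as [m' <-]; exists m'.
      rewrite <- IH, scons_aut; exact Hm.
    + intros [m Hm]; exists (g m); rewrite <- IH, scons_aut in Hm; exact Hm.
Qed.

Lemma aut_inv g : is_aut M g ->
  exists g', is_aut M g' /\ (forall x, g (g' x) = x) /\ (forall x, g' (g x) = x).
Proof.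
  intros Hg; pose proof Hg as [Hinj [Hsurj [Hf Hr]]].
  set (g' := fun y => proj1_sig (constructive_indefinite_description _ (Hsurj y))).
  assert (H1 : forall x, g (g' x) = x)
    by (intros; unfold g'; now destruct constructive_indefinite_description).
  assert (H2 : forall x, g' (g x) = x) by (intros; apply Hinj; auto).
  exists g'; split; [split; [|split; [|split]] | split]; auto.
  - intros x y E; now rewrite <- (H1 x), <- (H1 y), E.
  - intros y; exists (g y); auto.
  - intros f args; apply Hinj; rewrite H1, Hf; f_equal.
    apply functional_extensionality; intros; now rewrite H1.
  - intros r args; rewrite (Hr r (fun i => g' (args i))).
    replace (fun i => g (g' (args i))) with args; [tauto|].
    apply functional_extensionality; auto.
Qed.

Lemma holds_aut {V} g (p : formula L V) s :
  is_aut M g -> (holds M (fun v => g (s v)) p <-> holds M s p).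
Proof.
  intros Hg; destruct (aut_inv g Hg) as [g' [_ [H1 _]]]; split; intros H env.
  - rewrite <- (sat_aut g p Hg); apply H.
  - replace env with (fun n => g (g' (env n))) by (apply functional_extensionality; auto).
    rewrite (sat_aut g p Hg); apply H.
Qed.

Lemma aut_id : is_aut M (fun x => x).
Proof. repeat split; auto. intros y; now exists y. Qed.

Lemma aut_comp g h : is_aut M g -> is_aut M h -> is_aut M (fun x => g (h x)).
Proof.
  intros [Gi [Gs [Gf Gr]]] [Hi [Hs [Hf Hr]]]; split; [|split; [|split]]; auto.
  - intros y; destruct (Gs y) as [y1 <-]; destruct (Hs y1) as [y2 <-]; eauto.
  - intros; now rewrite Hf, Gf.
  - intros r args; rewrite (Hr r args), (Gr r); tauto.
Qed.

Lemma tdrel_aut {J} (Sigma : formula L (J + J) -> Prop) h x y : is_aut M h ->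
  tdrel M Sigma x y -> tdrel M Sigma (fun i => h (x i)) (fun i => h (y i)).
Proof.
  intros Hh H p Hp; apply (holds_ext M (fun v => h (sumf x y v))); [now intros []|].
  apply (holds_aut h p (sumf x y) Hh), H, Hp.
Qed.

End Automorphisms.

Section Smallness.
Variable K : Type.
Hypothesis small_nat : small K nat.
Hypothesis small_sigT : forall (J : Type) (X : J -> Type),
  small K J -> (forall j, small K (X j)) -> small K {j : J & X j}.

Lemma small_inj (X Y : Type) (h : Y -> X) :
  (forall x y, h x = h y -> x = y) -> small K X -> small K Y.
Proof. intros Hh HX [k Hk]; apply HX; exists (fun x => h (k x)); auto. Qed.

Lemma small_sum A B : small K A -> small K B -> small K (A + B).
Proof.
  intros HA HB.
  set (X := fun b : bool => if b then A else B).
  apply (small_inj {b : bool & X b} (A + B)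
           (fun v => match v with inl x => existT X true x | inr y => existT X false y end)).
  - intros [x|x] [y|y] E; try discriminate E.
    + apply (f_equal (fun p : {b : bool & X b} =>
               match p with existT _ true x => Some x | _ => None end)) in E; congruence.
    + apply (f_equal (fun p : {b : bool & X b} =>
               match p with existT _ false x => Some x | _ => None end)) in E; congruence.
  - apply small_sigT; [|intros []; auto].
    apply (small_inj nat bool (fun b : bool => if b then 1 else 0)); auto.
    intros [] []; simpl; congruence.
Qed.

Fixpoint tuple_type (I : Type) (n : nat) : Type :=
  match n with
  | 0 => unit
  | S n => {_ : I & tuple_type I n}
  end.

Fixpoint tuple_of_list {I} (l : list I) : tuple_type I (length l) :=
  match l with
  | nil => tt
  | i :: r => existT _ i (tuple_of_list r)
  end.

Fixpoint list_of_tuple {I} (n : nat) : tuple_type I n -> list I :=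
  match n with
  | 0 => fun _ => nil
  | S n => fun p => projT1 p :: list_of_tuple n (projT2 p)
  end.

Lemma list_of_tupleK {I} (l : list I) : list_of_tuple (length l) (tuple_of_list l) = l.
Proof. induction l; simpl; congruence. Qed.

Lemma small_list I : small K I -> small K (list I).
Proof.
  intros HI.
  apply (small_inj {n : nat & tuple_type I n} (list I)
           (fun l => existT (tuple_type I) (length l) (tuple_of_list l))).
  - intros x y E; apply (f_equal (fun p => list_of_tuple (projT1 p) (projT2 p))) in E.
    simpl in E; now rewrite !list_of_tupleK in E.
  - apply small_sigT; auto. intros n; induction n as [|n IH]; simpl; auto.
    apply (small_inj nat unit (fun _ => 0)); auto. now intros [] [].
Qed.

End Smallness.

Section BourbakiWitt.
Variables (X : Type) (le : X -> X -> Prop) (sup : (X -> Prop) -> X).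

Definition chain (C : X -> Prop) := forall x y, C x -> C y -> le x y \/ le y x.

Hypothesis le_refl : forall x, le x x.
Hypothesis le_trans : forall x y z, le x y -> le y z -> le x z.
Hypothesis le_anti : forall x y, le x y -> le y x -> x = y.
Hypothesis sup_ub : forall C c, chain C -> C c -> le c (sup C).
Hypothesis sup_lub : forall C u, chain C -> (forall c, C c -> le c u) -> le (sup C) u.

Section Tower.
Variable f : X -> X.
Hypothesis f_infl : forall x, le x (f x).

Inductive tower : X -> Prop :=
| tower_f : forall x, tower x -> tower (f x)
| tower_sup : forall C, chain C -> (forall c, C c -> tower c) -> tower (sup C).

Definition extreme x := forall y, tower y -> le y x -> y = x \/ le (f y) x.

Lemma extreme_cmp x : extreme x -> forall y, tower y -> le y x \/ le (f x) y.
Proof.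
  intros Hx y Ty; induction Ty as [y Ty IH|C HC HT IH].
  - destruct IH as [H|H].
    + destruct (Hx y Ty H) as [->|H2]; [right; apply le_refl | now left].
    + right; eauto.
  - destruct (classic (exists c, C c /\ le (f x) c)) as [[c [Cc Hc]]|Hn].
    + right; eauto.
    + left; apply sup_lub; auto; intros c Cc.
      destruct (IH c Cc); auto. exfalso; eauto.
Qed.

Lemma tower_extreme x : tower x -> extreme x.
Proof.
  intros Tx; induction Tx as [x Tx IH|C HC HT IH]; intros y Ty Hy.
  - destruct (extreme_cmp x IH y Ty) as [H|H].
    + destruct (IH y Ty H) as [->|H2]; right; eauto.
    + left; apply le_anti; auto.
  - destruct (classic (exists c, C c /\ le y c)) as [[c [Cc Hc]]|Hn].
    + destruct (IH c Cc y Ty Hc) as [->|H2]; [|right; eauto].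
      destruct (extreme_cmp c (IH c Cc) (sup C) (tower_sup C HC HT)) as [H|H];
        [left; apply le_anti | right]; auto.
    + left; apply le_anti; auto; apply sup_lub; auto; intros c Cc.
      destruct (extreme_cmp c (IH c Cc) y Ty) as [H|H]; [exfalso; eauto | eauto].
Qed.

Lemma tower_chain : chain tower.
Proof.
  intros x y Tx Ty.
  destruct (extreme_cmp x (tower_extreme x Tx) y Ty); [right | left]; eauto.
Qed.

Theorem bourbaki_witt : exists x, tower x /\ le (f x) x.
Proof.
  exists (sup tower); split; [apply tower_sup; auto; apply tower_chain|].
  apply sup_ub; [apply tower_chain|].
  apply tower_f, tower_sup; auto; apply tower_chain.
Qed.

End Tower.

Theorem zorn (P : X -> Prop) :
  (forall C, chain C -> (forall c, C c -> P c) -> P (sup C)) ->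
  exists s, P s /\ forall z, P z -> le s z -> le z s.
Proof.
  intros HP.
  set (f := fun x => match excluded_middle_informative
                            (exists z, P z /\ le x z /\ ~ le z x) with
                     | left H => proj1_sig (constructive_indefinite_description _ H)
                     | right _ => x end).
  assert (Hf : forall x, le x (f x) /\ (P x -> P (f x))).
  { intros x; unfold f; destruct excluded_middle_informative as [H|H]; [|auto].
    destruct (proj2_sig (constructive_indefinite_description _ H)) as [? [? _]]; auto. }
  destruct (bourbaki_witt f (fun x => proj1 (Hf x))) as [s [Ts Hs]].
  assert (Ps : P s).
  { clear Hs; induction Ts as [x _ IH|C HC _ IH]; [exact (proj2 (Hf x) IH) | now apply HP]. }
  exists s; split; auto; intros z Pz Hsz; apply NNPP; intros Hzs.
  unfold f in Hs; destruct excluded_middle_informative as [H|H]; [|eauto].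
  destruct (proj2_sig (constructive_indefinite_description _ H)) as [_ [_ Hn]]; auto.
Qed.

End BourbakiWitt.

Lemma collect_finite_support {B C} (S : C -> Prop) (R : B -> list C -> Prop) (ps : list B) :
  (forall p, In p ps -> exists l, (forall q, In q l -> S q) /\ R p l) ->
  exists lg, (forall q, In q lg -> S q) /\
    forall p, In p ps -> exists l, (forall q, In q l -> In q lg) /\ R p l.
Proof.
  induction ps as [|p ps IH]; intros Hps; [exists nil; simpl; tauto|].
  destruct IH as [lg [Hlg Hsub]]; [intros; apply Hps; simpl; auto|].
  destruct (Hps p (or_introl eq_refl)) as [l [Hl Hp]].
  exists (l ++ lg); split.
  - intros q Hq; apply in_app_or in Hq; destruct Hq; auto.
  - intros p' [<-|Hp'].
    + exists l; split; auto; intros; apply in_or_app; auto.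
    + destruct (Hsub p' Hp') as [l' [Hl' HR]].
      exists l'; split; auto; intros; apply in_or_app; auto.
Qed.

Section TupleSaturation.
Context {L : language} (M : structure L) (K : Type).
Hypothesis HM : monster M K.
Variables (A I : Type) (a : A -> M) (Sigma : formula L (A + I) -> Prop).
Hypothesis small_A : small K A.
Hypothesis small_I : small K I.
Hypothesis Sigma_closed : forall p, Sigma p -> closed M p.
Hypothesis Sigma_fin_sat : forall l, (forall p, In p l -> Sigma p) ->
  exists z : I -> M, forall p, In p l -> holds M (sumf a z) p.

Definition good_partial (z : I -> option M) := forall l, (forall p, In p l -> Sigma p) ->
  exists z' : I -> M, (forall i m, z i = Some m -> z' i = m) /\
                      forall p, In p l -> holds M (sumf a z') p.

Definition ple (z1 z2 : I -> option M) := forall i m, z1 i = Some m -> z2 i = Some m.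

Definition psup (C : (I -> option M) -> Prop) : I -> option M := fun i =>
  match excluded_middle_informative (exists m c, C c /\ c i = Some m) with
  | left H => Some (proj1_sig (constructive_indefinite_description _ H))
  | right _ => None
  end.

Lemma psup_inv C i m : psup C i = Some m -> exists c, C c /\ c i = Some m.
Proof.
  unfold psup; destruct excluded_middle_informative as [H|H]; [|discriminate].
  destruct constructive_indefinite_description as [m' Hm']; simpl.
  intros E; injection E as ->; exact Hm'.
Qed.

Lemma psup_ub C c : chain _ ple C -> C c -> ple c (psup C).
Proof.
  intros HC Cc i m E; destruct (psup C i) as [o|] eqn:Es.
  - destruct (psup_inv C i o Es) as [c' [Cc' E']].
    destruct (HC c c' Cc Cc') as [H|H]; [apply H in E | apply H in E']; congruence.
  - unfold psup in Es; destruct excluded_middle_informative; [discriminate|].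
    exfalso; eauto.
Qed.

Lemma psup_lub C u : (forall c, C c -> ple c u) -> ple (psup C) u.
Proof. intros H i m E; destruct (psup_inv C i m E) as [c [Cc E']]; eapply H; eauto. Qed.

Lemma ple_anti z1 z2 : ple z1 z2 -> ple z2 z1 -> z1 = z2.
Proof.
  intros H12 H21; apply functional_extensionality; intros i.
  destruct (z1 i) eqn:E1; [symmetry; auto|].
  destruct (z2 i) eqn:E2; [apply H21 in E2; congruence | reflexivity].
Qed.

Lemma good_none : good_partial (fun _ => None).
Proof.
  intros l Hl; destruct (Sigma_fin_sat l Hl) as [z Hz].
  exists z; split; [discriminate | exact Hz].
Qed.

Lemma psup_finite_agree C js : chain _ ple C ->
  exists c, (c = (fun _ => None) \/ C c) /\
    forall j m, In j js -> psup C j = Some m -> c j = Some m.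
Proof.
  intros HC; induction js as [|j js [c [Hc Hagree]]].
  - exists (fun _ => None); simpl; tauto.
  - destruct (psup C j) as [m|] eqn:Ej.
    + destruct (psup_inv C j m Ej) as [c1 [Cc1 E1]].
      assert (Hcmp : ple c c1 \/ ple c1 c).
      { destruct Hc as [->|Hc]; [left; discriminate | now apply HC]. }
      destruct Hcmp as [Hle|Hle]; [exists c1 | exists c]; split; auto;
        intros j' m' [<-|Hj] E'; rewrite ?Ej in E'; try injection E' as <-; eauto.
    + exists c; split; auto; intros j' m' [<-|Hj] E'; [congruence | eauto].
Qed.

Lemma psup_good C : chain _ ple C -> (forall c, C c -> good_partial c) -> good_partial (psup C).
Proof.
  intros HC HG l Hl.
  set (js := flat_map (fun p => rights (formula_fv p)) l).
  destruct (psup_finite_agree C js HC) as [c [Hc Hagree]].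
  assert (Gc : good_partial c) by (destruct Hc as [->|Hc]; [apply good_none | auto]).
  destruct (Gc l Hl) as [z' [Hz' Hreal]].
  exists (fun j => match psup C j with Some m => m | None => z' j end); split.
  - intros i m E; now rewrite E.
  - intros p Hp env; rewrite (sat_free_ext M p _ (sumf a z')); [apply Hreal; auto|].
    intros [x|j] Hv; simpl; auto.
    destruct (psup C j) eqn:E; auto. symmetry; apply Hz', Hagree; auto.
    apply in_flat_map; exists p; split; auto; now apply In_rights.
Qed.

Definition pupd (z : I -> option M) i m : I -> option M :=
  fun j => if eq_dec_classic j i then Some m else z j.

Section Extend.
Variables (z : I -> option M) (i : I) (m0 : M).

Definition extension_fill (m : M) (u : I -> M) (j : I) : M :=
  match z j with
  | Some mj => mj
  | None => if eq_dec_classic j i then m else u j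
  end.

(* Parameters: [a] and the values of [z]; the new variable [inr tt] stands for
   [i]; the remaining undefined variables are quantified away. *)
Definition extension_params : A + I -> M :=
  sumf a (fun j => match z j with Some m => m | None => m0 end).

Definition extension_ren (v : A + I) : ((A + I) + unit) + I :=
  match v with
  | inl x => inl (inl (inl x))
  | inr j => match z j with
             | Some _ => inl (inl (inr j))
             | None => if eq_dec_classic j i then inl (inr tt) else inr j
             end
  end.

Definition extension_formula (l : list (formula L (A + I))) : formula L ((A + I) + unit) :=
  let p := formula_ren extension_ren (fbigand l) in fex_vars (rights (formula_fv p)) p.

Lemma sat_extension_formula l m env :
  sat M (sumf extension_params (fun _ => m)) env (extension_formula l)
  <-> exists u, forall p, In p l -> sat M (sumf a (extension_fill m u)) env p.
Proof.
  unfold extension_formula; rewrite sat_fex_vars by (intros; now apply In_rights).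
  assert (Hfill : forall u, (fun v => sumf (sumf extension_params (fun _ => m)) u (extension_ren v))
                            = sumf a (extension_fill m u)).
  { intros u; apply functional_extensionality; intros [x|j]; [reflexivity|].
    cbv [extension_ren extension_fill extension_params sumf].
    destruct (z j) eqn:E; [now rewrite E|].
    now destruct (eq_dec_classic j i). }
  split; intros [u Hu]; exists u;
    [rewrite sat_ren, Hfill, sat_fbigand in Hu | rewrite sat_ren, Hfill, sat_fbigand]; exact Hu.
Qed.

Lemma good_extend : good_partial z -> z i = None -> exists m, good_partial (pupd z i m).
Proof.
  intros Gz Ezi.
  set (Pi := fun p => exists l, (forall q, In q l -> Sigma q) /\ p = extension_formula l).
  pose proof HM as (Hnat & _ & _ & Hreg & Hsat & _).
  destruct (Hsat (A + I)%type extension_params Pi) as [m Hm].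
  - now apply small_sum.
  - intros ps Hps.
    destruct (collect_finite_support Sigma (fun p l => p = extension_formula l) ps Hps)
      as [lg [Hlg Hsub]].
    destruct (Gz lg Hlg) as [z' [Hz' Hreal]].
    exists (z' i); intros p Hp env; destruct (Hsub p Hp) as [l [Hl ->]].
    apply sat_extension_formula; exists z'; intros q Hq.
    replace (sumf a (extension_fill (z' i) z')) with (sumf a z'); [apply Hreal; auto|].
    apply functional_extensionality; intros [x|j]; [reflexivity|]; cbv [sumf extension_fill].
    destruct (z j) eqn:Ej; [now apply Hz'|].
    destruct (eq_dec_classic j i); congruence.
  - exists m; intros l Hl.
    assert (Hl' : Pi (extension_formula l)) by (now exists l).
    destruct (proj1 (sat_extension_formula l m (fun _ => m)) (Hm _ Hl' _)) as [u Hu].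
    exists (extension_fill m u); split.
    + intros j mj; unfold pupd, extension_fill.
      destruct (eq_dec_classic j i) as [->|_]; [|now intros ->].
      rewrite Ezi; destruct (eq_dec_classic i i); congruence.
    + intros p Hp; apply (closed_holds M p _ (fun _ => m)); auto.
Qed.

End Extend.

Theorem tuple_saturation : exists z : I -> M, forall p, Sigma p -> holds M (sumf a z) p.
Proof.
  destruct (zorn _ ple psup (fun z i m H => H) (fun _ _ _ H1 H2 i m E => H2 i m (H1 i m E))
              ple_anti psup_ub (fun C u _ => psup_lub C u) good_partial psup_good) as [s [Gs Hmax]].
  assert (Htotal : forall i, s i <> None).
  { intros i Ei; destruct (carrier_inh M) as [m0].
    destruct (good_extend s i m0 Gs Ei) as [m Gm].
    assert (Hle : ple s (pupd s i m)).
    { intros j mj E; unfold pupd; destruct (eq_dec_classic j i); congruence. }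
    specialize (Hmax _ Gm Hle i m); unfold pupd in Hmax.
    destruct (eq_dec_classic i i); [|congruence].
    rewrite Ei in Hmax; discriminate (Hmax eq_refl). }
  destruct (carrier_inh M) as [m0].
  exists (fun i => match s i with Some m => m | None => m0 end); intros p Hp.
  destruct (Gs [p]) as [z' [Hz' Hreal]]; [intros q [<-|[]]; auto|].
  apply (holds_ext M (sumf a z')); [|apply Hreal; simpl; auto].
  intros [x|i]; simpl; auto.
  destruct (s i) eqn:E; [auto | now destruct (Htotal i)].
Qed.

End TupleSaturation.

Section TypeDefinability.
Context {L : language} (M : structure L) (K : Type).
Hypothesis HM : monster M K.

Definition realizes {V} (x : V -> M) (Q : formula L V -> Prop) := forall q, Q q -> holds M x q.

Lemma sat_fdisj_fex_fbigand {V W} (theta : formula L V) (l : list (formula L (V + W))) x env :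
  sat M x env (fdisj theta (fex_vars (rights (formula_fv (fbigand l))) (fbigand l)))
  <-> sat M x env theta \/ exists w, forall q, In q l -> sat M (sumf x w) env q.
Proof.
  unfold fdisj; simpl; rewrite sat_fex_vars by (intros; now apply In_rights).
  setoid_rewrite sat_fbigand; tauto.
Qed.

(* A closed formula or'ed with the projection of a small partial type is
   type-definable: the finitely many formulas of the type that cannot be
   realized over [x] produce a formula separating [x] from the relation. *)
Theorem formula_or_projection_type_definable {V W} (theta : formula L V)
  (Q : formula L (V + W) -> Prop) (x : V -> M) :
  small K V -> small K W -> closed M theta -> (forall q, Q q -> closed M q) ->
  (forall p, (forall y, holds M y theta \/ (exists w, realizes (sumf y w) Q) -> holds M y p) ->
             holds M x p) ->
  holds M x theta \/ exists w, realizes (sumf x w) Q.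
Proof.
  intros HV HW Htheta HQ Hx; destruct (carrier_inh M) as [m0].
  destruct (classic (exists w, realizes (sumf x w) Q)) as [Hw|Hnw]; [now right|left].
  assert (Hfin : exists l, (forall q, In q l -> Q q) /\
                   ~ exists w : W -> M, forall q, In q l -> holds M (sumf x w) q).
  { apply NNPP; intros Hn; apply Hnw.
    apply (tuple_saturation M K HM V W x Q HV HW HQ).
    intros l Hl; apply NNPP; intros Hnl; apply Hn; now exists l. }
  destruct Hfin as [l [HlQ Hnl]].
  set (phi := fdisj theta (fex_vars (rights (formula_fv (fbigand l))) (fbigand l))).
  assert (Hphi : holds M x phi).
  { apply Hx; intros y Hy env; unfold phi; rewrite sat_fdisj_fex_fbigand.
    destruct Hy as [Hy|[w Hw]]; [left; apply Hy | right; exists w; intros q Hq; apply Hw; auto]. }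
  specialize (Hphi (fun _ => m0)); unfold phi in Hphi; rewrite sat_fdisj_fex_fbigand in Hphi.
  destruct Hphi as [Hth|[w Hw]]; [now apply (closed_holds M theta x (fun _ => m0) Htheta)|].
  exfalso; apply Hnl; exists w; intros q Hq.
  apply (closed_holds M q _ (fun _ => m0) (HQ q (HlQ q Hq))), Hw, Hq.
Qed.

End TypeDefinability.

Section SigInEnum.
Variable A : Type.

Fixpoint sig_In_enum (t : list A) : list {x | In x t} :=
  match t as t0 return list {x | In x t0} with
  | nil => nil
  | x :: r => exist _ x (in_eq x r)
              :: map (fun k => exist _ (proj1_sig k) (in_cons x _ r (proj2_sig k))) (sig_In_enum r)
  end.

Lemma sig_In_enum_complete t k : In k (sig_In_enum t).
Proof.
  induction t as [|x r IH]; destruct k as [y Hy]; [destruct Hy|]; simpl.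
  destruct Hy as [<-|Hy]; [left; f_equal; apply proof_irrelevance|right].
  apply in_map_iff; exists (exist _ y Hy); split; [f_equal; apply proof_irrelevance | apply IH].
Qed.

End SigInEnum.

Section NormalHyperimaginary.
Context {L : language} (M : structure L) (K : Type).
Hypothesis HM : monster M K.
Variable e : hyperimaginary M K.
Hypothesis e_normal : normal_h e.
Local Notation I := (hI e).
Local Notation a := (hrep e).
Local Notation E := (hE e).

Lemma Fix_comp g1 g2 : Fix e g1 -> Fix e g2 -> Fix e (fun u => g1 (g2 u)).
Proof.
  intros [A1 F1] [A2 F2]; split; [now apply aut_comp|].
  destruct (hE_equiv e) as [_ [_ Htrans]].
  eapply Htrans; [apply (tdrel_aut M E g1 _ _ A1 F2) | exact F1].
Qed.

Lemma Fix_inv g g' : Fix e g -> is_aut M g' -> (forall x, g' (g x) = x) -> Fix e g'.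
Proof.
  intros [Ag Fg] Ag' Hg'; split; auto.
  destruct (hE_equiv e) as [_ [Hsym _]]; apply Hsym.
  pose proof (tdrel_aut M E g' _ _ Ag' Fg) as H; simpl in H.
  replace (fun i => g' (g (a i))) with a in H; [exact H|].
  apply functional_extensionality; auto.
Qed.

Section Restriction.
Variable t : list I.

Definition coord := {i : I | In i t}.

Definition restr (x : I -> M) (k : coord) : M := x (proj1_sig k).

Definition conj_rel (x y : coord -> M) : Prop :=
  x = y \/ exists h g, is_aut M h /\ Fix e g /\
    x = restr (fun i => h (g (a i))) /\ y = restr (fun i => h (a i)).

Lemma conj_rel_equiv : is_equiv conj_rel.
Proof.
  split; [|split].
  - intros x; now left.
  - intros x y [->|[h [g [Ah [Fg [-> ->]]]]]]; [now left|right].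
    destruct (aut_inv M g (proj1 Fg)) as [g' [Ag' [Hgg' Hg'g]]].
    exists (fun u => h (g u)), g'; split; [now apply aut_comp, Fg|].
    split; [eapply Fix_inv; eauto | split; [|reflexivity]].
    unfold restr; apply functional_extensionality; intros k; now rewrite Hgg'.
  - intros x y z [<-|[h1 [g1 [Ah1 [Fg1 [Hx Hy]]]]]]; [tauto|].
    intros [<-|[h2 [g2 [Ah2 [Fg2 [Hy' Hz]]]]]]; [right; now exists h1, g1|right].
    destruct (aut_inv M h1 Ah1) as [h1' [Ah1' [P1 Q1]]].
    destruct (aut_inv M h2 Ah2) as [h2' [Ah2' [P2 Q2]]].
    (* [g1] conjugated by [h2' o h1] stays in [Fix e] by normality. *)
    assert (Fconj : Fix e (fun u => h2' (h1 (g1 (h1' (h2 u)))))).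
    { apply (e_normal g1 (fun u => h2' (h1 u)) (fun u => h1' (h2 u))); auto.
      - now apply aut_comp.
      - now apply aut_comp.
      - intros u; now rewrite P1, Q2.
      - intros u; now rewrite P2, Q1. }
    exists h2, (fun u => h2' (h1 (g1 (h1' (h2 (g2 u)))))).
    split; [exact Ah2 | split; [now apply (Fix_comp _ g2 Fconj) | split; [|exact Hz]]].
    rewrite Hx; apply functional_extensionality; intros k.
    assert (Hk : h1 (a (proj1_sig k)) = h2 (g2 (a (proj1_sig k))))
      by (apply (f_equal (fun f => f k)) in Hy'; rewrite Hy in Hy'; exact Hy').
    unfold restr; now rewrite P2, <- Hk, Q1.
Qed.

Definition eq_formula : formula L (coord + coord) :=
  fbigand (map (fun k => feq (tfree (inl k)) (tfree (inr k))) (sig_In_enum I t)).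

Lemma eq_formula_closed : closed M eq_formula.
Proof.
  intros s e1 e2; unfold eq_formula; rewrite !sat_fbigand.
  split; intros H p Hp; specialize (H p Hp);
    apply in_map_iff in Hp; destruct Hp as [k [<- _]]; exact H.
Qed.

Lemma holds_eq_formula x y : holds M (sumf x y) eq_formula <-> x = y.
Proof.
  destruct (carrier_inh M) as [m].
  rewrite (closed_holds M _ _ (fun _ => m) eq_formula_closed); unfold eq_formula.
  rewrite sat_fbigand; split.
  - intros H; apply functional_extensionality; intros k.
    apply (H (feq (tfree (inl k)) (tfree (inr k)))), in_map_iff.
    exists k; split; [reflexivity | apply sig_In_enum_complete].
  - intros -> p Hp; apply in_map_iff in Hp; destruct Hp as [k [<- _]]; reflexivity.
Qed.

(* The witnesses [(W, Z)] range over pairs of realizations of [tp(a)] with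
   [W E Z], restricting to [(x, y)] on [t]. *)
Definition conj_type (q : formula L ((coord + coord) + (I + I))) : Prop :=
  (exists p, holds M a p /\ q = formula_ren (fun i => inr (inl i)) (fclose p)) \/
  (exists p, holds M a p /\ q = formula_ren (fun i => inr (inr i)) (fclose p)) \/
  (exists p, E p /\ q = formula_ren inr (fclose p)) \/
  (exists k, q = feq (tfree (inr (inl (proj1_sig k)))) (tfree (inl (inl k)))) \/
  (exists k, q = feq (tfree (inr (inr (proj1_sig k)))) (tfree (inl (inr k)))).

Lemma conj_type_closed q : conj_type q -> closed M q.
Proof.
  intros [[p [_ ->]]|[[p [_ ->]]|[[p [_ ->]]|[[k ->]|[k ->]]]]];
    try (intros s e1 e2; rewrite !sat_ren; apply fclose_closed);
    intros s e1 e2; simpl; tauto.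
Qed.

Lemma realizes_conj_type x y W Z :
  realizes M (sumf (sumf x y) (sumf W Z)) conj_type <->
  (forall p, holds M a p -> holds M W p) /\ (forall p, holds M a p -> holds M Z p) /\
  tdrel M E W Z /\ x = restr W /\ y = restr Z.
Proof.
  destruct (carrier_inh M) as [m].
  set (s := sumf (sumf x y) (sumf W Z)).
  assert (Heq : forall v w, holds M s (feq (tfree v) (tfree w)) <-> s v = s w).
  { intros v w; split; [intros H; apply (H (fun _ => m)) | intros H env; exact H]. }
  split.
  - intros H; split; [|split; [|split; [|split]]].
    + intros p Hp; apply (holds_ren_fclose M (fun i => inr (inl i)) p s), H.
      left; now exists p.
    + intros p Hp; apply (holds_ren_fclose M (fun i => inr (inr i)) p s), H.
      right; left; now exists p.
    + intros p Hp.
      apply (holds_ext M (fun v => s (inr v))); [now intros []|].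
      apply (holds_ren_fclose M inr p s), H; right; right; left; now exists p.
    + apply functional_extensionality; intros k; symmetry.
      apply (Heq (inr (inl (proj1_sig k))) (inl (inl k))), H; do 3 right; left; now exists k.
    + apply functional_extensionality; intros k; symmetry.
      apply (Heq (inr (inr (proj1_sig k))) (inl (inr k))), H; do 4 right; now exists k.
  - intros (HW & HZ & HE & -> & ->) q Hq.
    destruct Hq as [[p [Hp ->]]|[[p [Hp ->]]|[[p [Hp ->]]|[[k ->]|[k ->]]]]];
      try (apply Heq; reflexivity); apply holds_ren_fclose; auto.
Qed.

(* Homogeneity moves [(W, Z)] to [(h (g a), h a)] with [g] fixing [e]. *)
Lemma conj_rel_restr W Z :
  (forall p, holds M a p -> holds M W p) -> (forall p, holds M a p -> holds M Z p) ->
  tdrel M E W Z -> conj_rel (restr W) (restr Z).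
Proof.
  intros HW HZ HE; right.
  destruct HM as (_ & _ & _ & _ & _ & Hhom).
  destruct (Hhom I a Z (hI_small e) (holds_type_eq M a Z HZ)) as [k [Ak Hk]].
  destruct (aut_inv M k Ak) as [k' [Ak' [Hkk' Hk'k]]].
  assert (HW' : forall p, holds M a p <-> holds M (fun i => k' (W i)) p).
  { intros p; rewrite (holds_type_eq M a W HW p); symmetry; now apply holds_aut. }
  destruct (Hhom I a (fun i => k' (W i)) (hI_small e) HW') as [f [Af Hf]].
  exists k, f; split; [exact Ak | split; [split; [exact Af|] | split]].
  - pose proof (tdrel_aut M E k' W Z Ak' HE) as HE'.
    replace (fun i => k' (W i)) with (fun i => f (a i)) in HE'
      by (apply functional_extensionality; auto).
    replace (fun i => k' (Z i)) with a in HE'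
      by (apply functional_extensionality; intros i; now rewrite <- Hk, Hk'k).
    exact HE'.
  - unfold restr; apply functional_extensionality; intros i; now rewrite Hf, Hkk'.
  - unfold restr; apply functional_extensionality; intros i; now rewrite Hk.
Qed.

Lemma conj_rel_projection x y :
  conj_rel x y <-> holds M (sumf x y) eq_formula \/
                  exists w, realizes M (sumf (sumf x y) w) conj_type.
Proof.
  rewrite holds_eq_formula; split;
    [intros [Hxy|Hw]; [now left|right] | intros [->|Hw]; [now left|]].
  - destruct Hw as [h [g [Ah [[Ag Fg] [-> ->]]]]].
    exists (sumf (fun i => h (g (a i))) (fun i => h (a i))).
    apply realizes_conj_type; split; [|split; [|split; [|split]]]; try reflexivity.
    + intros p Hp; apply (holds_aut M (fun u => h (g u)) p a); [now apply aut_comp | exact Hp].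
    + intros p Hp; now apply holds_aut.
    + apply (tdrel_aut M E h _ _ Ah Fg).
  - destruct Hw as [w Hw].
    replace w with (sumf (fun i => w (inl i)) (fun i => w (inr i))) in Hw
      by (apply functional_extensionality; now intros []).
    apply realizes_conj_type in Hw; destruct Hw as (HW & HZ & HE & -> & ->).
    now apply conj_rel_restr.
Qed.

Definition conj_rel_type (p : formula L (coord + coord)) : Prop :=
  forall x y, conj_rel x y -> holds M (sumf x y) p.

Lemma small_coord : small K coord.
Proof.
  apply (small_inj K I coord (@proj1_sig _ _)); [|apply hI_small].
  intros [i Hi] [j Hj]; simpl; intros ->; f_equal; apply proof_irrelevance.
Qed.

Lemma tdrel_conj_rel_type x y : tdrel M conj_rel_type x y <-> conj_rel x y.
Proof.
  split; [|intros Hxy p Hp; now apply Hp].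
  pose proof HM as (Hnat & _ & _ & Hreg & _).
  intros Hxy; apply conj_rel_projection.
  apply (formula_or_projection_type_definable M K HM eq_formula conj_type).
  - apply small_sum; auto; apply small_coord.
  - apply small_sum; auto; apply hI_small.
  - apply eq_formula_closed.
  - apply conj_type_closed.
  - intros p Hp; apply Hxy; intros x' y' Hx'y'.
    now apply Hp, conj_rel_projection.
Qed.

Lemma conj_rel_type_equiv : is_equiv (tdrel M conj_rel_type).
Proof.
  destruct conj_rel_equiv as (Hrefl & Hsym & Htrans).
  split; [|split]; intros; rewrite tdrel_conj_rel_type in *; eauto.
Qed.

Definition conj_class : hyperimaginary M K :=
  Build_hyperimaginary small_coord (restr a) conj_rel_type_equiv.

Lemma conj_class_finitary : finitary conj_class.
Proof.
  exists conj_class; split; [|intros c; tauto].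
  exists (sig_In_enum I t); apply sig_In_enum_complete.
Qed.

End Restriction.

Lemma restr_eq t x y : restr t x = restr t y -> forall i, In i t -> x i = y i.
Proof. intros H i Hi; exact (f_equal (fun f => f (exist _ i Hi)) H). Qed.

(* A formula of [E] only sees the finitely many coordinates of [a] it mentions. *)
Lemma Fix_iff_Fix_conj_class g : is_aut M g -> (Fix e g <-> forall t, Fix (conj_class t) g).
Proof.
  intros Ag; split.
  - intros Fg t; split; [exact Ag|]; apply tdrel_conj_rel_type; right.
    exists (fun u => u), g; split; [apply aut_id | now split].
  - intros HF; split; [exact Ag|]; intros p Hp env.
    set (index := fun v : I + I => match v with inl i => i | inr i => i end).
    set (t := map index (formula_fv p)).
    assert (Ht : forall v, In v (formula_fv p) -> In (index v) t)
      by (intros v Hv; apply (in_map index), Hv).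
    destruct (proj1 (tdrel_conj_rel_type t _ _) (proj2 (HF t)))
      as [Heq|[h [g' [Ah [[_ Fg'] [Hx Hy]]]]]].
    + destruct (hE_equiv e) as [Hrefl _].
      rewrite (sat_free_ext M p _ (sumf a a)); [apply (Hrefl a p Hp)|].
      intros [i|i] Hv; simpl; [|reflexivity].
      exact (restr_eq t (fun i => g (a i)) a Heq i (Ht _ Hv)).
    + rewrite (sat_free_ext M p _ (sumf (fun i => h (g' (a i))) (fun i => h (a i)))).
      * apply (tdrel_aut M E h _ _ Ah Fg' p Hp).
      * intros [i|i] Hv; simpl.
        -- exact (restr_eq t (fun i => g (a i)) _ Hx i (Ht _ Hv)).
        -- exact (restr_eq t a _ Hy i (Ht _ Hv)).
Qed.

End NormalHyperimaginary.

Theorem mainTheorem5 (L : language) (M : structure L) (K : Type)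
  (HM : monster M K) (e : hyperimaginary M K) :
  normal_h e ->
  exists (J : Type) (d : J -> hyperimaginary M K),
    small K J /\ (forall j, finitary (d j)) /\ hsim M K (Fix e) (FixSeq d).
Proof.
  intros Hn.
  pose proof HM as (Hnat & _ & _ & Hreg & _).
  exists (list (hI e)), (conj_class M K HM e Hn); split; [|split].
  - apply small_list; auto; apply hI_small.
  - apply conj_class_finitary.
  - intros c; split; intros Hc g Ag Hg; apply Hc; auto;
      pose proof (Fix_iff_Fix_conj_class M K HM e Hn g Ag) as Hiff.
    + apply Hiff, Hg.
    + split; [exact Ag | apply Hiff, Hg].
Qed.
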